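(* Let $d\ge 2$ and let $\rho$ be a density matrix on $\mathbb{C}^d$ with entries $\rho_{jk}=\langle j|\rho|k\rangle$, $j,k\in\{0,\dots,d-1\}$, in the computational basis. Then $$F_c(\rho)=\frac{1}{d}+\frac{1}{d}\,C_{l_1}(\rho)$$ if and only if one can choose arguments $\theta_{jk}\in[0,2\pi]$ of the entries (i.e. $\rho_{jk}=|\rho_{jk}|e^{\mathfrak{i}\theta_{jk}}$, with $\theta_{jk}$ arbitrary when $\rho_{jk}=0$) such that for all $j,p,k\in\{0,\dots,d-1\}$ there is an integer $n$ with $$\theta_{jp}+\theta_{pk}=2n\pi+\theta_{jk}.$$
   Context: Coherence is taken with respect to the computational basis $\{|0\rangle,\dots,|d-1\rangle\}$. The $l_1$-norm coherence is $C_{l_1}(\rho)=\sum_{j\neq k}|\langle j|\rho|k\rangle|$. The set of maximally coherent states is $\mathcal{M}=\{|\phi\rangle=\frac{1}{\sqrt d}\sum_{j=0}^{d-1}e^{\mathfrak{i}\theta_j}|j\rangle:\theta_j\in[0,2\pi]\}$. The coherence fraction of a state $\rho$ is $F_c(\rho)=\max_{|\phi\rangle\in\mathcal{M}}\langle\phi|\rho|\phi\rangle$. *)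

From HB Require Import structures.
From mathcomp Require Import all_boot all_order all_algebra.
From mathcomp Require Import complex.
From mathcomp Require Import reals trigo.
Set Implicit Arguments. Unset Strict Implicit. Unset Printing Implicit Defensive.
Import Order.TTheory GRing.Theory Num.Theory.
Local Open Scope ring_scope.
Local Open Scope complex_scope.

Section Defs.
Variable R : realType.

Definition expi (t : R) : R[i] := cos t +i* sin t.

Definition adjmx (m n : nat) (A : 'M[R[i]]_(m, n)) : 'M[R[i]]_(n, m) :=
  map_mx Num.conj A^T.

Definition density_matrix (d : nat) (rho : 'M[R[i]]_d) : Prop :=
  adjmx rho = rho /\
  (forall v : 'cV[R[i]]_d, 0 <= (adjmx v *m rho *m v) 0 0) /\
  \tr rho = 1.

Definition C_l1 (d : nat) (rho : 'M[R[i]]_d) : R[i] :=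
  \sum_(j < d) \sum_(k < d | j != k) `|rho j k|.

Definition mcs (d : nat) (theta : 'I_d -> R) : 'cV[R[i]]_d :=
  \col_j (((Num.sqrt (d%:R : R))^-1)%:C * expi (theta j)).

Definition phase_ok (t : R) : Prop := 0 <= t <= 2 * pi.

Definition overlap (d : nat) (rho : 'M[R[i]]_d) (theta : 'I_d -> R) : R[i] :=
  (adjmx (mcs theta) *m rho *m mcs theta) 0 0.

Definition coherence_fraction_is (d : nat) (rho : 'M[R[i]]_d) (x : R[i]) : Prop :=
  (exists2 theta : 'I_d -> R, (forall j, phase_ok (theta j)) & overlap rho theta = x) /\
  (forall theta : 'I_d -> R, (forall j, phase_ok (theta j)) -> overlap rho theta <= x).

End Defs.

From HB Require Import structures.
From mathcomp Require Import all_boot all_order all_algebra.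
From mathcomp Require Import complex.
From mathcomp Require Import reals trigo.
From mathcomp Require Import ring lra.
Set Implicit Arguments. Unset Strict Implicit. Unset Printing Implicit Defensive.
Import Order.TTheory GRing.Theory Num.Theory.
Local Open Scope ring_scope.
Local Open Scope complex_scope.

(* For phi = mcs th,
     <phi|rho|phi> = (tr rho + sum_(j != k) rho_jk e^{i(th_k - th_j)}) / d,
   so the triangle inequality bounds it by (1 + C_l1 rho) / d, with equality iff
   every off-diagonal term is nonnegative, i.e. rho_jk = |rho_jk| e^{i(th_j - th_k)}.
   Differences th_j - th_k reduced mod 2 pi form a cocycle mod 2 pi; conversely a
   cocycle Th satisfies Th_jk = Th_0k - Th_0j mod 2 pi, so it is such a difference. *)

Lemma sum_diag_offdiag (V : nmodType) n (F : 'I_n -> 'I_n -> V) :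
  \sum_j \sum_k F j k = \sum_j F j j + \sum_j \sum_(k | j != k) F j k.
Proof.
rewrite -big_split /=; apply: eq_bigr => j _.
by rewrite (bigD1 j) //=; congr (_ + _); apply: eq_bigl => k; rewrite eq_sym.
Qed.

Lemma sumr_eq_sum_normP (C : numClosedFieldType) (I : finType) (P : pred I)
    (F : I -> C) :
  \sum_(i | P i) F i = \sum_(i | P i) `|F i| <-> forall i, P i -> F i = `|F i|.
Proof. by split=> [|eqF]; [apply: normC_sum_upper | apply: eq_bigr]. Qed.

Section Phases.
Variable R : realType.
Implicit Types a b t : R.

Lemma expiD a b : expi (a + b) = expi a * expi b.
Proof. by rewrite /expi cosD sinD; simpc; congr (_ +i* _); ring. Qed.

Lemma expi0 : expi 0 = 1 :> R[i].
Proof. by rewrite /expi cos0 sin0. Qed.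

Lemma expiBK a b : expi (a - b) * expi (b - a) = 1.
Proof. by rewrite -expiD addrC subrKA subrr expi0. Qed.

Lemma norm_expi a : `|expi a| = 1.
Proof. by rewrite /expi; simpc; rewrite cos2Dsin2 sqrtr1. Qed.

Lemma expi_2pi_mulz (m : int) : @expi R (2 * m%:~R * pi) = 1.
Proof.
have expi_2pi_muln (l : nat) : @expi R (pi *+ 2 *+ l) = 1.
  have expi_periodic : periodic (@expi R) (pi *+ 2 : R).
    by move=> u; rewrite /expi cosD2pi sinD2pi.
  by rewrite -[_ *+ l]add0r (periodicn expi_periodic) expi0.
case: m => l.
  by rewrite -(expi_2pi_muln l); congr expi; ring.
have := expiBK 0 (pi *+ 2 *+ l.+1); rewrite subr0 expi_2pi_muln mulr1 => <-.
by congr expi; rewrite NegzE mulrNz; ring.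
Qed.

Definition mod2pi t : R := t - 2 * (Num.floor (t / (2 * pi)))%:~R * pi.

Lemma mod2pi_phase_ok t : phase_ok (mod2pi t).
Proof.
have pi_gt0 : 0 < pi :> R := pi_gt0 R.
set q := t / (2 * pi); set f : R := (Num.floor q)%:~R.
have f_le_q : f <= q := real_floor_le (num_real q).
have q_lt_f1 : q < f + 1 by rewrite -[1]/(1%:~R) -intrD real_floorD1_gt ?num_real.
have t_eq : t = 2 * pi * q by rewrite /q mulrC divfK // mulf_neq0 // gt_eqF.
by rewrite /phase_ok /mod2pi -/q -/f t_eq; apply/andP; split; nra.
Qed.

Lemma expi_mod2pi t : expi (mod2pi t) = expi t.
Proof.
rewrite -[RHS]mul1r -(expi_2pi_mulz (- Num.floor (t / (2 * pi)))) -expiD.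
by congr expi; rewrite /mod2pi; ring.
Qed.

Definition phase_cocycle (I : Type) (Th : I -> I -> R) :=
  forall j p k, exists n : int, Th j p + Th p k = 2 * n%:~R * pi + Th j k.

Lemma phase_cocycle_expiB (I : Type) (th : I -> R) :
  exists Th : I -> I -> R,
    [/\ forall j k, phase_ok (Th j k),
        forall j k, expi (Th j k) = expi (th j - th k)
      & phase_cocycle Th].
Proof.
exists (fun j k => mod2pi (th j - th k)); split=> [j k|j k|j p k].
- exact: mod2pi_phase_ok.
- exact: expi_mod2pi.
- pose fl t := Num.floor (t / (2 * pi)).
  exists (fl (th j - th k) - fl (th j - th p) - fl (th p - th k)).
  by rewrite /mod2pi !rmorphB /=; ring.
Qed.

Lemma phase_cocycle_coboundary (I : Type) (i0 : I) (Th : I -> I -> R) :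
  (forall j k, phase_ok (Th j k)) -> phase_cocycle Th ->
  exists2 psi : I -> R, forall j, phase_ok (psi j) &
    forall j k, expi (Th j k) = expi (psi j - psi k).
Proof.
move=> Th_ok Th_cocycle; exists (fun j => 2 * pi - Th i0 j) => [j | j k].
  by have /andP[? ?] := Th_ok i0 j; apply/andP; split; lra.
have [n Hn] := Th_cocycle i0 j k.
have -> : Th j k = 2 * n%:~R * pi + (2 * pi - Th i0 j - (2 * pi - Th i0 k)) by lra.
by rewrite [LHS]expiD expi_2pi_mulz mul1r.
Qed.

End Phases.

Section Overlap.
Variables (R : realType) (n : nat).
Implicit Types (A rho : 'M[R[i]]_n) (th : 'I_n -> R).

Lemma quad_formE A (v : 'cV[R[i]]_n) :
  (adjmx v *m A *m v) 0 0 = \sum_j \sum_k Num.conj (v j 0) * A j k * v k 0.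
Proof.
rewrite mxE exchange_big /=; apply: eq_bigr => k _.
by rewrite mxE mulr_suml; apply: eq_bigr => j _; rewrite !mxE.
Qed.

Lemma psd_diag_ge0 A :
  (forall v : 'cV_n, 0 <= (adjmx v *m A *m v) 0 0) -> forall j, 0 <= A j j.
Proof.
move=> A_psd j; have := A_psd (\col_i (i == j)%:R); rewrite quad_formE.
rewrite (bigD1 j) //= [X in _ + X]big1 ?addr0; last first.
  by move=> i /negbTE ij; apply: big1 => k _; rewrite !mxE ij conjC0 !mul0r.
rewrite (bigD1 j) //= [X in _ + X]big1 ?addr0; last first.
  by move=> k /negbTE kj; rewrite !mxE kj mulr0.
by rewrite !mxE eqxx conjC1 mul1r mulr1.
Qed.

Definition rephase rho th j k := rho j k * expi (th k - th j).

Lemma norm_rephase rho th j k : `|rephase rho th j k| = `|rho j k|.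
Proof. by rewrite normrM norm_expi mulr1. Qed.

Lemma rephase_diag rho th j : rephase rho th j j = rho j j.
Proof. by rewrite /rephase subrr expi0 mulr1. Qed.

Lemma rephase_eq_normP rho th j k :
  rephase rho th j k = `|rho j k| <-> rho j k = `|rho j k| * expi (th j - th k).
Proof.
split=> [<- | rhoE]; first by rewrite -mulrA expiBK mulr1.
by rewrite /rephase {1}rhoE -mulrA expiBK mulr1.
Qed.

Lemma overlapE rho th :
  overlap rho th = n%:R^-1 * \sum_j \sum_k rephase rho th j k.
Proof.
set s : R[i] := (Num.sqrt (n%:R : R))^-1%:C.
have s2 : s * s = n%:R^-1.
  by rewrite -rmorphM /= -expr2 exprVn sqr_sqrtr ?ler0n // fmorphV rmorph_nat.
rewrite /overlap quad_formE mulr_sumr; apply: eq_bigr => j _.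
rewrite mulr_sumr; apply: eq_bigr => k _.
have conj_mcs : Num.conj (mcs th j 0) = s * expi (- th j).
  by rewrite mxE /expi cosN sinN; simpc.
rewrite conj_mcs mxE /rephase addrC expiD -s2; ring.
Qed.

Lemma overlap_offdiagE rho th :
  overlap rho th =
    n%:R^-1 * (\tr rho + \sum_j \sum_(k | j != k) rephase rho th j k).
Proof.
rewrite overlapE sum_diag_offdiag; congr (_ * (_ + _)).
by apply: eq_bigr => j _; rewrite rephase_diag.
Qed.

Lemma C_l1_rephaseE rho th :
  C_l1 rho = \sum_j \sum_(k | j != k) `|rephase rho th j k|.
Proof. by apply: eq_bigr => j _; apply: eq_bigr => k _; rewrite norm_rephase. Qed.

Section DensityMatrix.
Variable rho : 'M[R[i]]_n.
Hypothesis rho_density : density_matrix rho.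

Lemma overlap_le_bound th : overlap rho th <= n%:R^-1 + n%:R^-1 * C_l1 rho.
Proof.
have [_ [rho_psd rho_tr]] := rho_density.
have overlap_ge0 : 0 <= overlap rho th := rho_psd (mcs th).
rewrite -(ger0_norm overlap_ge0) overlap_offdiagE rho_tr.
rewrite normrM ger0_norm ?invr_ge0 ?ler0n // -[X in _ <= X + _]mulr1 -mulrDr.
apply: ler_wpM2l; first by rewrite invr_ge0 ler0n.
apply: le_trans (ler_normD _ _) _; rewrite normr1 lerD2l (C_l1_rephaseE rho th).
apply: le_trans (ler_norm_sum _ _ _) _; apply: ler_sum => j _.
exact: ler_norm_sum.
Qed.

Lemma overlap_eq_boundP th : (0 < n)%N ->
  overlap rho th = n%:R^-1 + n%:R^-1 * C_l1 rho <->
  forall j k, rho j k = `|rho j k| * expi (th j - th k).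
Proof.
move=> n_gt0; have [_ [rho_psd rho_tr]] := rho_density.
have n_inv_neq0 : (n%:R : R[i])^-1 != 0 by rewrite invr_eq0 pnatr_eq0 -lt0n.
rewrite overlap_offdiagE rho_tr (C_l1_rephaseE rho th) mulrDr mulr1 !pair_big_dep /=.
split=> [/addrI/(mulfI n_inv_neq0)/sumr_eq_sum_normP offdiag j k | rhoE].
  apply/rephase_eq_normP; rewrite -(norm_rephase rho th).
  have [<- | jk] := eqVneq j k; last exact: (offdiag (j, k)).
  by rewrite rephase_diag ger0_norm // psd_diag_ge0.
congr (_ + _ * _); apply/sumr_eq_sum_normP => -[j k] _ /=.
by rewrite norm_rephase; apply/rephase_eq_normP.
Qed.

End DensityMatrix.
End Overlap.

Theorem theorem1 (R : realType) (d : nat) (rho : 'M[R[i]]_d) :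
  (2 <= d)%N -> density_matrix rho ->
  (coherence_fraction_is rho ((d%:R)^-1 + (d%:R)^-1 * C_l1 rho) <->
   exists theta : 'I_d -> 'I_d -> R,
     [/\ forall j k, phase_ok (theta j k),
         forall j k, rho j k = `|rho j k| * expi (theta j k)
       & forall j p k, exists n : int,
           theta j p + theta p k = 2 * n%:~R * pi + theta j k]).
Proof.
move=> d_ge2 rho_density; have d_gt0 : (0 < d)%N := ltnW d_ge2.
split=> [[[psi _ /(overlap_eq_boundP rho_density _ d_gt0) rhoE] _] |
         [Th [Th_ok rhoE Th_cocycle]]].
  have [Th [Th_ok ThE Th_cocycle]] := phase_cocycle_expiB psi.
  by exists Th; split=> // j k; rewrite ThE.
have [psi psi_ok psiE] := phase_cocycle_coboundary (Ordinal d_gt0) Th_ok Th_cocycle.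
split=> [|th _]; last exact: overlap_le_bound.
exists psi => //; apply/(overlap_eq_boundP rho_density _ d_gt0) => j k.
by rewrite -psiE.
Qed.
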